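(* Let $V\in\mathbb{C}$ and let $A(V,0,\pi)$ be the operator in $L_2(0,1)$ acting by $A(V,0,\pi)\psi=i\psi'+V\big[\psi(0)-\tfrac{i}{2}\langle\psi,V\rangle\big]$ on the domain of $\psi\in W_2^1(0,1)$ with $\psi(1)=-[\psi(0)-i\langle\psi,V\rangle]$, where $\langle\psi,V\rangle=\overline{V}\int_0^1\psi(x)\,dx$ (the potential is the constant function $V$). Then $\lambda=0$ is an eigenvalue of $A(V,0,\pi)$ if and only if $V=2i$. In this case $\lambda=0$ has multiplicity $2$, and the corresponding orthogonal eigenfunctions are $\psi_1(x)=1$ and $\psi_2(x)=x-\tfrac12$.
   Context: $\langle f,g\rangle=\int_0^1 f\bar g\,dx$; $W_2^1(0,1)$ is the Sobolev space. *)

From HB Require Import structures.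
From mathcomp Require Import all_boot all_order all_algebra.
From mathcomp Require Import all_classical all_reals all_analysis.
From mathcomp Require Import complex.
Set Implicit Arguments. Unset Strict Implicit. Unset Printing Implicit Defensive.
Import Order.TTheory GRing.Theory Num.Theory.
Local Open Scope classical_set_scope.
Local Open Scope ring_scope.
Local Open Scope complex_scope.

Section Defs.
Variable R : realType.
Local Notation mu := (@lebesgue_measure R).

Definition iu : R[i] := Complex 0 1.

Definition cint (f : R -> R[i]) (a b : R) : R[i] :=
  (Rintegral mu `[a, b] (fun x => complex.Re (f x))) +i*
  (Rintegral mu `[a, b] (fun x => complex.Im (f x))).

Definition L2_01 (g : R -> R) : Prop :=
  measurable_fun `[(0:R), 1] g /\ mu.-integrable `[(0:R), 1] (fun x => ((g x) ^+ 2)%:E).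

(* psi is in W_2^1(0,1) with (weak) derivative g in L_2(0,1):
   psi(x) = psi(0) + int_0^x g on [0,1] (absolutely continuous representative) *)
Definition W21 (psi g : R -> R[i]) : Prop :=
  L2_01 (fun x => complex.Re (g x)) /\ L2_01 (fun x => complex.Im (g x)) /\
  forall x, 0 <= x <= 1 -> psi x = psi 0 + cint g 0 x.

Definition ip01 (f h : R -> R[i]) : R[i] := cint (fun x => f x * (h x)^*) 0 1.

Definition ipV (V : R[i]) (psi : R -> R[i]) : R[i] := ip01 psi (fun _ => V).

Definition in_dom (V : R[i]) (psi g : R -> R[i]) : Prop :=
  W21 psi g /\ psi 1 = - (psi 0 - iu * ipV V psi).

Definition A_act (V : R[i]) (psi g : R -> R[i]) (x : R) : R[i] :=
  iu * g x + V * (psi 0 - (iu / 2%:R) * ipV V psi).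

(* psi in dom A and A psi = lam psi in L_2(0,1) (i.e. a.e. on [0,1]) *)
Definition eigen_eq (V lam : R[i]) (psi : R -> R[i]) : Prop :=
  exists g, in_dom V psi g /\
    {ae mu, forall x, x \in `[(0:R), 1] -> A_act V psi g x = lam * psi x}.

(* psi is the zero element of L_2(0,1) *)
Definition L2_zero (psi : R -> R[i]) : Prop :=
  {ae mu, forall x, x \in `[(0:R), 1] -> psi x = 0}.

Definition is_eigenvalue (V lam : R[i]) : Prop :=
  exists psi, eigen_eq V lam psi /\ ~ L2_zero psi.

End Defs.

From HB Require Import structures.
From mathcomp Require Import all_boot all_order all_algebra.
From mathcomp Require Import all_classical all_reals all_analysis.
From mathcomp Require Import unstable measurable_realfun complex ring lra.
Set Implicit Arguments. Unset Strict Implicit. Unset Printing Implicit Defensive.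
Import Order.TTheory GRing.Theory Num.Theory.
Local Open Scope classical_set_scope.
Local Open Scope ring_scope.
Local Open Scope complex_scope.

(* For lambda = 0 the eigenvalue equation says that psi' is a.e. the constant
   c = i V [psi(0) - (i/2) <psi,V>], so an eigenfunction is affine,
   psi = p + x c, and then <psi,V> = (p + c/2) conj V.  The boundary condition
   becomes (p + c/2) (2 - i conj V) = 0.  If p + c/2 = 0, the equation reduces
   to p (V - 2i) = 0, so psi = 0 unless V = 2i; otherwise conj V = -2i.
   Conversely, for V = 2i both conditions hold for every p and c, so the
   kernel consists of all affine functions, spanned by 1 and x - 1/2; these
   are orthogonal because x - 1/2 has mean zero. *)

Lemma ae_witness d (T : semiRingOfSetsType d) (R : realFieldType)
    (mu : {measure set T -> \bar R}) (D : set T) (P : T -> Prop) :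
  measurable D -> (0 < mu D)%E -> {ae mu, forall x, P x} -> exists2 x, D x & P x.
Proof.
move=> mD muD0 [N [mN muN0 notPN]]; apply: contrapT => noP.
have DN : D `<=` N by move=> x Dx; apply: notPN => Px; apply: noP; exists x.
have : (0 < mu N)%E.
  exact: lt_le_trans muD0 (le_measure mu (mem_set mD) (mem_set mN) DN).
by rewrite muN0 ltxx.
Qed.

Section real_integrals.
Variable R : realType.
Local Notation mu := (@lebesgue_measure R).

(* [filterS], with the filter instance that typeclass search misses here. *)
Lemma lebesgue_aeS (P Q : R -> Prop) : (forall x, P x -> Q x) ->
  {ae mu, forall x, P x} -> {ae mu, forall x, Q x}.
Proof. by move=> PQ; apply: filterS; first exact: (ae_filter_ringOfSetsType mu). Qed.

Lemma lebesgue_measure_itv0 (x : R) : 0 <= x -> mu `[0, x] = x%:E.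
Proof.
move=> x0; rewrite lebesgue_measure_itv /= lte_fin oppr0 adde0.
by case: ltgtP x0 => // <-.
Qed.

Lemma Rintegral_itv0_cst (k x : R) : 0 <= x -> \int[mu]_(t in `[0, x]) k = k * x.
Proof.
move=> x0; rewrite Rintegral_cst // -[fine _]/(fine (mu `[0, x])).
by rewrite lebesgue_measure_itv0.
Qed.

Lemma integrable01_continuous (f : R -> R) :
  continuous (f : R^o -> R^o) -> mu.-integrable `[0, 1] (EFin \o f).
Proof.
move=> cf; apply: continuous_compact_integrable; first exact: segment_compact.
exact: continuous_subspaceT.
Qed.

Lemma integrable01_cst (k : R) : mu.-integrable `[0, 1] (EFin \o cst k).
Proof. by apply: integrable01_continuous => x; exact: cvg_cst. Qed.

Lemma integrable01_id : mu.-integrable `[0, 1] (EFin \o id).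
Proof. by apply: integrable01_continuous => x; exact: cvg_id. Qed.

(* The substitution t |-> 1 - t gives int t = int (1 - t) = 1 - int t. *)
Lemma Rintegral01_id : \int[mu]_(t in `[0, 1]) t = 2%:R^-1.
Proof.
have : \int[mu]_(t in `[0, 1]) t = \int[mu]_(t in `[0, 1]) (1 - t).
  rewrite -[in RHS]onem1; apply: Rintegration_by_substitution_onem.
    by rewrite ler01 lexx.
  by apply: (@continuous_subspaceT R^o R^o) => x; exact: cvg_id.
have -> : \int[mu]_(t in `[0, 1]) (1 - t) =
          \int[mu]_(t in `[0, 1]) 1 - \int[mu]_(t in `[0, 1]) t.
  exact: RintegralB (integrable01_cst 1) integrable01_id.
rewrite Rintegral_itv0_cst ?ler01 // mul1r; lra.
Qed.

Lemma Rintegral01_affine (a b : R) :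
  \int[mu]_(t in `[0, 1]) (a + t * b) = a + b / 2%:R.
Proof.
have ia := integrable01_cst a; have iid := integrable01_id.
have itb : mu.-integrable `[0, 1] (EFin \o (fun t => t * b)).
  by apply: integrable01_continuous; exact: mulrr_continuous.
rewrite RintegralD // RintegralZr //.
by rewrite Rintegral01_id Rintegral_itv0_cst ?ler01 // mulr1 mulrC.
Qed.

Lemma Rintegral_itv0_ae_cst (f : R -> R) (k x : R) : 0 <= x <= 1 ->
  measurable_fun `[(0 : R), 1] f ->
  {ae mu, forall t, t \in `[(0 : R), 1] -> f t = k} ->
  \int[mu]_(t in `[0, x]) f t = k * x.
Proof.
move=> /andP[x0 x1] mf fk; rewrite -Rintegral_itv0_cst //; congr fine.
have sub01 : `[0, x] `<=` `[0, 1] by apply: subset_itvl; rewrite bnd_simp.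
apply: ae_eq_integral => //.
- by apply/measurable_EFinP; exact: measurable_funS mf.
- by apply: lebesgue_aeS fk => t fk /sub01/fk ->.
Qed.

End real_integrals.

Section complex_integrals.
Variable R : realType.
Implicit Types p c : R[i].

Lemma eq_cint (f h : R -> R[i]) (a b : R) : {in `[a, b], f =1 h} ->
  cint f a b = cint h a b.
Proof.
by move=> fh; rewrite /cint; congr (_ +i* _); apply: eq_Rintegral => t;
  rewrite inE => /fh ->.
Qed.

Lemma Re_affine p c (t : R) :
  complex.Re (p + t%:C * c) = complex.Re p + t * complex.Re c.
Proof. by case: p c => [? ?] [? ?]; simpc. Qed.

Lemma Im_affine p c (t : R) :
  complex.Im (p + t%:C * c) = complex.Im p + t * complex.Im c.
Proof. by case: p c => [? ?] [? ?]; simpc. Qed.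

Lemma cint01_affine p c : cint (fun t => p + t%:C * c) 0 1 = p + c / 2%:R.
Proof.
rewrite /cint.
under eq_Rintegral do rewrite Re_affine.
under [X in _ +i* X]eq_Rintegral do rewrite Im_affine.
have -> : (2%:R : R[i])^-1 = (2%:R^-1 : R)%:C by rewrite fmorphV rmorph_nat.
rewrite !Rintegral01_affine.
by case: p c => [? ?] [? ?]; simpc.
Qed.

Lemma cint_itv0_ae_cst (g : R -> R[i]) c (x : R) : 0 <= x <= 1 ->
  measurable_fun `[(0 : R), 1] (fun t => complex.Re (g t)) ->
  measurable_fun `[(0 : R), 1] (fun t => complex.Im (g t)) ->
  {ae lebesgue_measure, forall t, t \in `[(0 : R), 1] -> g t = c} ->
  cint g 0 x = x%:C * c.
Proof.
move=> x01 mRe mIm gc; rewrite /cint.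
rewrite (Rintegral_itv0_ae_cst (k := complex.Re c) x01 mRe); last first.
  by apply: lebesgue_aeS gc => t gc /gc ->.
rewrite (Rintegral_itv0_ae_cst (k := complex.Im c) x01 mIm); last first.
  by apply: lebesgue_aeS gc => t gc /gc ->.
by case: c gc => ? ? _; simpc; rewrite ![x * _]mulrC.
Qed.

End complex_integrals.

Section kernel.
Variable R : realType.
Implicit Types (p c V : R[i]) (psi : R -> R[i]).

Lemma iu_sqr : iu R * iu R = -1.
Proof. by rewrite -expr2 sqr_i. Qed.

Lemma iuK V : - (iu R * (iu R * V)) = V.
Proof. by rewrite mulrA iu_sqr mulN1r opprK. Qed.

Lemma conj_2iu : Num.conj (2%:R * iu R) = - (2%:R * iu R).
Proof. by rewrite rmorphM /= /iu; simpc. Qed.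

(* The equation A psi = 0 and the boundary condition for psi = p + x c,
   with <psi,V> = (p + c/2) conj V (see [ipV_affine]). *)
Definition affine_in_kernel V p c : Prop :=
  iu R * c + V * (p - iu R / 2%:R * ((p + c / 2%:R) * Num.conj V)) = 0 /\
  p + c = - (p - iu R * ((p + c / 2%:R) * Num.conj V)).

Lemma affine_in_kernel_2iu p c : affine_in_kernel (2%:R * iu R) p c.
Proof. by rewrite /affine_in_kernel conj_2iu; split; field: iu_sqr. Qed.

Lemma affine_in_kernel_cases V p c :
  affine_in_kernel V p c -> V = 2%:R * iu R \/ p = 0 /\ c = 0.
Proof.
case=> eq_A eq_bc; set m := p + c / 2%:R in eq_A eq_bc.
have : m * (2%:R - iu R * Num.conj V) = 0.
  have -> : m * (2%:R - iu R * Num.conj V) =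
            (p + c) + (p - iu R * (m * Num.conj V)) by rewrite /m; field.
  by rewrite eq_bc addNr.
move/eqP; rewrite mulf_eq0 => /orP[/eqP m0 | /eqP].
  have c2p : c = 2%:R * m - 2%:R * p by rewrite /m; field.
  rewrite m0 mulr0 sub0r in c2p.
  rewrite m0 mul0r mulr0 subr0 in eq_A.
  have : p * (V - 2%:R * iu R) = 0 by rewrite -eq_A c2p; ring.
  move/eqP; rewrite mulf_eq0 => /orP[/eqP p0 | /eqP].
    by right; rewrite c2p p0 mulr0 oppr0.
  by move/subr0_eq; left.
move/subr0_eq/esym => iuV.
left; rewrite -[V]conjCK -[Num.conj V]iuK iuV.
by rewrite rmorphN rmorphM /= /iu; simpc.
Qed.

Lemma ipV_affine V psi p c :
  (forall x, 0 <= x <= 1 -> psi x = p + x%:C * c) ->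
  ipV V psi = (p + c / 2%:R) * Num.conj V.
Proof.
move=> psi_aff; rewrite /ipV /ip01.
rewrite (eq_cint (h := fun x => p * Num.conj V + x%:C * (c * Num.conj V))).
  by rewrite cint01_affine; ring.
by move=> x; rewrite in_itv /= => /psi_aff ->; ring.
Qed.

Lemma L2_01_cst (r : R) : L2_01 (fun _ => r).
Proof. by split; [exact: measurable_cst | exact: integrable01_cst]. Qed.

Lemma eigen_eq0P V psi : eigen_eq V 0 psi <->
  exists p c, affine_in_kernel V p c /\ forall x, 0 <= x <= 1 -> psi x = p + x%:C * c.
Proof.
split.
  case=> g [[[[mRe _] [[mIm _] psiW]] bc] Apsi].
  set c := iu R * (V * (psi 0 - iu R / 2%:R * ipV V psi)).
  have gc : {ae lebesgue_measure, forall t, t \in `[(0 : R), 1] -> g t = c}.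
    apply: lebesgue_aeS Apsi => t At /At; rewrite /A_act mul0r.
    move=> /eqP; rewrite addr_eq0 => /eqP ig.
    by rewrite -[g t]iuK ig mulrN opprK.
  have psi_aff x : 0 <= x <= 1 -> psi x = psi 0 + x%:C * c.
    by move=> x01; rewrite psiW // (cint_itv0_ae_cst x01 mRe mIm gc).
  have ip := ipV_affine V psi_aff.
  exists (psi 0), c; split => //; rewrite /affine_in_kernel -ip; split.
    by rewrite /c mulrA iu_sqr mulN1r addNr.
  by rewrite -bc (psi_aff 1) ?ler01 ?lexx // rmorph1 mul1r.
case=> p [c [[eq_A eq_bc] psi_aff]].
have ip := ipV_affine V psi_aff.
have p0 : psi 0 = p by rewrite psi_aff ?lexx ?ler01 // rmorph0 mul0r addr0.
exists (fun _ => c); split; first split; first split.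
- exact: L2_01_cst.
- split; first exact: L2_01_cst.
  move=> x x01; rewrite psi_aff // p0 (cint_itv0_ae_cst (c := c) x01) //.
  exact: aeW.
- by rewrite (psi_aff 1) ?ler01 ?lexx // p0 ip rmorph1 mul1r.
- by apply: aeW => t _; rewrite /A_act ip p0 mul0r.
Qed.

Lemma L2_zero_affine psi p c :
  (forall x, 0 <= x <= 1 -> psi x = p + x%:C * c) -> L2_zero psi -> p = 0 /\ c = 0.
Proof.
move=> psi_aff; rewrite /L2_zero => psi0.
have vanish_in (a b : R) : 0 <= a -> a < b -> b <= 1 ->
    exists2 t, a <= t <= b & p + t%:C * c = 0.
  move=> a0 ab b1.
  have ab_pos : (0 < lebesgue_measure `[a, b])%E.
    by rewrite lebesgue_measure_itv /= lte_fin ab -EFinD lte_fin subr_gt0.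
  have [|t] := ae_witness (mu := @lebesgue_measure R) (D := `[a, b]%classic)
    _ ab_pos psi0; first exact: measurable_itv.
  rewrite /= in_itv /= => /andP[a_t t_b] psi_t; exists t; first by rewrite a_t.
  have t01 : 0 <= t <= 1 by rewrite (le_trans a0 a_t) (le_trans t_b b1).
  by rewrite -psi_aff // psi_t // in_itv.
have [t1 /andP[_ t1_le] e1] := vanish_in 0 (1 / 3%:R) (lexx 0) ltac:(lra) ltac:(lra).
have [t2 /andP[t2_ge _] e2] := vanish_in (2 / 3%:R) 1 ltac:(lra) ltac:(lra) (lexx 1).
have c0 : c = 0.
  have : (t2 - t1)%:C * c = (p + t2%:C * c) - (p + t1%:C * c) by rewrite rmorphB; ring.
  rewrite e1 e2 subrr => /eqP; rewrite mulf_eq0 fmorph_eq0 subr_eq0.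
  by case/orP => /eqP // t21; exfalso; lra.
by split => //; move: e1; rewrite c0 mulr0 addr0.
Qed.

Lemma affine_shift a b (x : R) :
  a * 1 + b * (x%:C - (1 / 2%:R)%:C) = (a - b / 2%:R) + x%:C * b.
Proof. by rewrite mul1r fmorphV rmorph_nat; ring. Qed.

End kernel.

Theorem proposition6p1 (R : realType) (V : R[i]) :
  (is_eigenvalue V 0 <-> V = 2%:R * iu R) /\
  (V = 2%:R * iu R ->
     let psi1 := fun _ : R => (1 : R[i]) in
     let psi2 := fun x : R => x%:C - (1 / 2%:R)%:C in
     (* the eigenspace of 0 is exactly span{psi1, psi2} (as elements of L_2(0,1)) *)
     (forall psi : R -> R[i],
        eigen_eq V 0 psi <->
        exists a b : R[i], forall x : R, 0 <= x <= 1 -> psi x = a * psi1 x + b * psi2 x) /\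
     (* psi1, psi2 are linearly independent in L_2(0,1): the multiplicity is 2 *)
     (forall a b : R[i],
        L2_zero (fun x => a * psi1 x + b * psi2 x) -> a = 0 /\ b = 0) /\
     (* psi1 and psi2 are orthogonal *)
     ip01 psi1 psi2 = 0).
Proof.
split; first split.
- case=> psi [/eigen_eq0P[p [c [ker psi_aff]]] psi_nz].
  case: (affine_in_kernel_cases ker) => // -[p0 c0]; case: psi_nz.
  by apply: aeW => x; rewrite in_itv /= => /psi_aff ->; rewrite p0 c0 mulr0 addr0.
- move=> ->; exists (fun _ => 1); split.
    apply/eigen_eq0P; exists 1, 0; split; first exact: affine_in_kernel_2iu.
    by move=> x _; rewrite mulr0 addr0.
  move/(L2_zero_affine (p := 1) (c := 0)) => [x _ | /eqP]; last by rewrite oner_eq0.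
  by rewrite mulr0 addr0.
move=> -> psi1 psi2; split; [|split].
- move=> psi; rewrite eigen_eq0P; split.
    case=> p [c [_ psi_aff]]; exists (p + c / 2%:R), c => x x01.
    by rewrite psi_aff // affine_shift addrK.
  case=> a [b ab_psi]; exists (a - b / 2%:R), b; split; first exact: affine_in_kernel_2iu.
  by move=> x x01; rewrite ab_psi // affine_shift.
- move=> a b /(L2_zero_affine (p := a - b / 2%:R) (c := b)) [x _ | ab0 b0].
    by rewrite /psi1 /psi2 affine_shift.
  by rewrite b0 mul0r subr0 in ab0.
rewrite /ip01 (eq_cint (h := fun x : R => - 2%:R^-1 + x%:C * 1)).
  by rewrite cint01_affine mul1r addNr.
move=> x _; rewrite /psi1 /psi2 mul1r -rmorphB conj_Creal; last first.
  by apply/complex_realP; eexists.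
by rewrite rmorphB mulr1 addrC mul1r fmorphV rmorph_nat.
Qed.
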